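(* Let $\lambda,\mathfrak{g}_s>0$ and let $\alpha$ be a positive real root of $\alpha^3-\lambda\alpha+\mathfrak{g}_s=0$ with $2\alpha^3>\mathfrak{g}_s$; set $\Sigma=\tfrac12\sqrt{4\alpha^2-2\mathfrak{g}_s/\alpha}>0$. For $T>0$ define $$Z_1(T)=\alpha+\frac{\Sigma^2}{\sinh(\Sigma T)\,[\Sigma\cosh(\Sigma T)+\alpha\sinh(\Sigma T)]},\qquad Z_0(T)=\frac{\mathfrak{g}_s}{2\alpha}\Big(1-\frac{\Sigma^2}{[\Sigma\cosh(\Sigma T)+\alpha\sinh(\Sigma T)]^2}\Big).$$ Then $Z_1(T)\to\alpha$ as $T\to\infty$, and for all $T>0$: $$Z_1'(T)=\lambda-Z_1(T)^2-2Z_0(T),\qquad Z_0'(T)=2Z_1(T)Z_0(T)-\mathfrak{g}_s,$$ $$Z_1'(T)=-\bar W(Z_1(T)),\qquad Z_0(T)=\mathfrak{g}_s\,W_{\lambda,\mathfrak{g}_s}(Z_1(T)),$$ where $\bar W(X)=(X-\alpha)\sqrt{(X+\alpha)^2-2\mathfrak{g}_s/\alpha}$ and $W_{\lambda,\mathfrak{g}_s}(X)=\dfrac{-(X^2-\lambda)+(X-\alpha)\sqrt{(X+\alpha)^2-2\mathfrak{g}_s/\alpha}}{2\mathfrak{g}_s}$ (positive square roots, $X>\alpha$).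
   Context: These functions are the continuum (scaling) limits of generating functions of labeled trees encoding quadrangulations with a weight $\mathfrak{g}=\mathfrak{g}_s\epsilon^3$ per local maximum of the distance labeling, with $g=\tfrac14(1-\lambda\epsilon^2)$ and distance $t=T/\epsilon$; the claim itself is an identity about the explicit functions above. *)

From Stdlib Require Import Reals.
Open Scope R_scope.

Definition Sigma (alpha gs : R) : R := / 2 * sqrt (4 * alpha ^ 2 - 2 * gs / alpha).

Definition Dn (alpha gs T : R) : R :=
  Sigma alpha gs * cosh (Sigma alpha gs * T) + alpha * sinh (Sigma alpha gs * T).

Definition Zone (alpha gs T : R) : R :=
  alpha + (Sigma alpha gs) ^ 2 / (sinh (Sigma alpha gs * T) * Dn alpha gs T).

Definition Zzero (alpha gs T : R) : R :=
  gs / (2 * alpha) * (1 - (Sigma alpha gs) ^ 2 / (Dn alpha gs T) ^ 2).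

Definition Wbar (alpha gs X : R) : R :=
  (X - alpha) * sqrt ((X + alpha) ^ 2 - 2 * gs / alpha).

Definition W (lam gs alpha X : R) : R :=
  (- (X ^ 2 - lam) + (X - alpha) * sqrt ((X + alpha) ^ 2 - 2 * gs / alpha)) / (2 * gs).

(* Write a for alpha and sg for Sigma alpha gs.  The hypotheses on (lam, gs, alpha)
   are equivalent to the two parameter relations
       gs = 2 a (a^2 - sg^2)        and        lam = 3 a^2 - 2 sg^2,
   after which gs, lam and the square root hidden in Sigma disappear: everything
   becomes a statement about the functions Z1, Z0 of T built from sinh (sg T) and
   cosh (sg T), for arbitrary a, sg > 0.  For such a, sg and T > 0:
   - Z1 T - a = sg^2 / (sinh (sg T) * den T) lies in (0, 2/T), hence Z1 T -> a;
   - the two Riccati equations are rational identities in e = exp (sg T);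
   - the discriminant (Z1 + a)^2 - 2 gs/a is the square of an explicit positive
     rational function of sinh, cosh, so its square root is known and
     (Z1 - a) sqrt (...) = Z1^2 + 2 Z0 - lam, which yields both the relation
     Z1' = - Wbar (Z1) and Z0 = gs W (Z1). *)

From Stdlib Require Import Reals Lra.
From Coquelicot Require Import Coquelicot.
Open Scope R_scope.

(* Positivity of x makes e = exp x exceed 1; this keeps e^2 - 1 away from 0. *)
Lemma exp_gt_1 (x : R) : 0 < x -> 1 < exp x.
Proof. intro Hx; rewrite <- exp_0; apply exp_increasing; exact Hx. Qed.

Lemma sinh_exp (x : R) : sinh x = (exp x - / exp x) / 2.
Proof. unfold sinh; rewrite exp_Ropp; reflexivity. Qed.

Lemma cosh_exp (x : R) : cosh x = (exp x + / exp x) / 2.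
Proof. unfold cosh; rewrite exp_Ropp; reflexivity. Qed.

(* Crude lower bound for sinh, enough for the 1/T decay of Z1 - a. *)
Lemma sinh_gt_half (x : R) : 0 < x -> x / 2 < sinh x.
Proof.
intro Hx; rewrite sinh_exp.
assert (He : 1 + x < exp x) by (apply exp_ineq1; lra).
assert (Hinv : / exp x < 1).
{ rewrite <- Rinv_1; apply Rinv_lt_contravar; lra. }
lra.
Qed.

(* cosh x - 1 = (exp x - 1)^2 / (2 exp x) >= 0. *)
Lemma cosh_ge_1 (x : R) : 1 <= cosh x.
Proof.
rewrite cosh_exp.
pose proof (exp_pos x) as He.
assert (Hsq : 0 <= (exp x - 1) ^ 2 * / exp x)
  by (apply Rmult_le_pos; [apply pow2_ge_0 | apply Rlt_le, Rinv_0_lt_compat; lra]).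
replace ((exp x - 1) ^ 2 * / exp x) with (exp x + / exp x - 2) in Hsq by (field; lra).
lra.
Qed.

Lemma Sigma_radicand_pos (a gs : R) :
  0 < a -> gs < 2 * a ^ 3 -> 0 < 4 * a ^ 2 - 2 * gs / a.
Proof.
intros Ha Hgs.
replace (4 * a ^ 2 - 2 * gs / a) with ((2 * a ^ 3 - gs) * (2 / a)) by (field; lra).
apply Rmult_lt_0_compat; [lra | apply Rdiv_lt_0_compat; lra].
Qed.

Lemma Sigma_pos (a gs : R) : 0 < a -> gs < 2 * a ^ 3 -> 0 < Sigma a gs.
Proof.
intros Ha Hgs; unfold Sigma.
apply Rmult_lt_0_compat; [lra | apply sqrt_lt_R0, Sigma_radicand_pos; assumption].
Qed.

Lemma gs_from_Sigma (a gs : R) :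
  0 < a -> gs < 2 * a ^ 3 -> gs = 2 * a * (a ^ 2 - Sigma a gs ^ 2).
Proof.
intros Ha Hgs; unfold Sigma.
rewrite Rpow_mult_distr, pow2_sqrt by (apply Rlt_le, Sigma_radicand_pos; assumption).
field; lra.
Qed.

Lemma lam_from_cubic (a sg lam gs : R) :
  0 < a -> a ^ 3 - lam * a + gs = 0 -> gs = 2 * a * (a ^ 2 - sg ^ 2) ->
  lam = 3 * a ^ 2 - 2 * sg ^ 2.
Proof.
intros Ha Hcub Hgs; subst gs.
apply (Rmult_eq_reg_l a); [|lra].
lra.
Qed.

(* Proves a rational identity in sinh x and cosh x (x > 0, proof Hx) by writing
   them via e = exp x > 1; the nonvanishing side conditions are all positivity
   statements in e, a and sg. *)
Ltac hyperbolic_field x Hx :=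
  rewrite ?sinh_exp, ?cosh_exp;
  let He := fresh "He" in
  pose proof (exp_gt_1 x Hx) as He;
  let e := fresh "e" in
  set (e := exp x) in *;
  let He2 := fresh "He2" in
  assert (He2 : 1 < e * e) by nra;
  field; repeat split; apply Rgt_not_eq; nra.

Section RiccatiSolution.

Variables a sg : R.
Hypotheses (Ha : 0 < a) (Hsg : 0 < sg).

(* The general solution pair, for arbitrary a, sg > 0 and coupling g; by
   definition Zone alpha gs = Z1 alpha (Sigma alpha gs) and
   Zzero alpha gs = Z0 alpha (Sigma alpha gs) gs. *)
Definition den (T : R) : R := sg * cosh (sg * T) + a * sinh (sg * T).
Definition Z1 (T : R) : R := a + sg ^ 2 / (sinh (sg * T) * den T).
Definition Z0 (g T : R) : R := g / (2 * a) * (1 - sg ^ 2 / den T ^ 2).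

(* The denominator den T is bounded below by sg (cosh >= 1, sinh > 0). *)
Lemma den_gt (T : R) : 0 < T -> sg < den T.
Proof.
intro HT; unfold den.
assert (Hx : 0 < sg * T) by (apply Rmult_lt_0_compat; lra).
pose proof (cosh_ge_1 (sg * T)) as Hc.
pose proof (sinh_gt_half (sg * T) Hx) as Hs.
assert (sg <= sg * cosh (sg * T)) by (rewrite <- (Rmult_1_r sg) at 1; apply Rmult_le_compat_l; lra).
assert (0 < a * sinh (sg * T)) by (apply Rmult_lt_0_compat; lra).
lra.
Qed.

Lemma sinh_den_lower (T : R) : 0 < T -> sg * T / 2 * sg < sinh (sg * T) * den T.
Proof.
intro HT; assert (Hx : 0 < sg * T) by (apply Rmult_lt_0_compat; lra).
apply Rmult_le_0_lt_compat; [lra | lra | apply sinh_gt_half, Hx | apply den_gt, HT].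
Qed.

Lemma sinh_den_pos (T : R) : 0 < T -> 0 < sinh (sg * T) * den T.
Proof.
intro HT; apply (Rlt_trans _ (sg * T / 2 * sg)); [|exact (sinh_den_lower T HT)].
assert (0 < sg * T) by (apply Rmult_lt_0_compat; lra); nra.
Qed.

Lemma Z1_gap_bound (T : R) : 0 < T -> 0 < Z1 T - a < 2 / T.
Proof.
intro HT.
pose proof (sinh_den_lower T HT) as Hlow.
unfold Z1; replace (a + _ - a) with (sg ^ 2 / (sinh (sg * T) * den T)) by ring.
split.
- apply Rdiv_lt_0_compat; nra.
- apply (Rmult_lt_reg_r (sinh (sg * T) * den T)); [nra|].
  unfold Rdiv; rewrite Rmult_assoc, Rinv_l by nra.
  apply (Rmult_lt_reg_l T); [lra|].
  replace (T * (2 * / T * (sinh (sg * T) * den T))) with (2 * (sinh (sg * T) * den T))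
    by (field; lra).
  nra.
Qed.

Lemma Z1_tends_to_a (eps : R) :
  0 < eps -> exists M : R, forall T : R, M < T -> Rabs (Z1 T - a) < eps.
Proof.
intro Heps; exists (2 / eps); intros T HT.
assert (HM : 0 < 2 / eps) by (apply Rdiv_lt_0_compat; lra).
destruct (Z1_gap_bound T ltac:(lra)) as [Hpos Hlt].
rewrite Rabs_pos_eq by lra.
apply (Rlt_trans _ (2 / T)); [exact Hlt|].
apply (Rmult_lt_reg_r T); [lra|].
replace (2 / T * T) with 2 by (field; lra).
apply (Rmult_lt_reg_l (/ eps)); [apply Rinv_0_lt_compat; lra|].
replace (/ eps * 2) with (2 / eps) by (unfold Rdiv; ring).
replace (/ eps * (eps * T)) with T by (field; lra).
exact HT.
Qed.

Variables g lam : R.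
Hypotheses (Hg : g = 2 * a * (a ^ 2 - sg ^ 2)) (Hl : lam = 3 * a ^ 2 - 2 * sg ^ 2).

Lemma Z1_riccati (T : R) : 0 < T ->
  derivable_pt_lim Z1 T (lam - Z1 T ^ 2 - 2 * Z0 g T).
Proof.
intro HT; assert (Hx : 0 < sg * T) by (apply Rmult_lt_0_compat; lra).
pose proof (sinh_den_pos T HT) as Hpos.
apply is_derive_Reals; unfold Z1, Z0; unfold den in *; rewrite Hg, Hl.
auto_derive.
- apply Rgt_not_eq; exact Hpos.
- hyperbolic_field (sg * T) Hx.
Qed.

Lemma Z0_riccati (T : R) : 0 < T ->
  derivable_pt_lim (Z0 g) T (2 * Z1 T * Z0 g T - g).
Proof.
intro HT; assert (Hx : 0 < sg * T) by (apply Rmult_lt_0_compat; lra).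
assert (Hd : 0 < den T) by (pose proof (den_gt T HT); lra).
apply is_derive_Reals; unfold Z1, Z0; unfold den in *; rewrite Hg.
auto_derive.
- apply Rgt_not_eq; nra.
- hyperbolic_field (sg * T) Hx.
Qed.

(* The positive square root of the discriminant (Z1 + a)^2 - 2 g / a. *)
Definition disc_root (T : R) : R :=
  (sg ^ 2 * (cosh (sg * T) ^ 2 + sinh (sg * T) ^ 2)
   + 2 * a * sg * sinh (sg * T) * cosh (sg * T)) / (sinh (sg * T) * den T).

Lemma sqrt_discriminant (T : R) : 0 < T ->
  sqrt ((Z1 T + a) ^ 2 - 2 * g / a) = disc_root T.
Proof.
intro HT; assert (Hx : 0 < sg * T) by (apply Rmult_lt_0_compat; lra).
pose proof (sinh_gt_half (sg * T) Hx) as Hs.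
pose proof (cosh_ge_1 (sg * T)) as Hc.
assert (Hroot : 0 <= disc_root T).
{ unfold disc_root; apply Rlt_le, Rdiv_lt_0_compat; [|apply sinh_den_pos, HT].
  assert (Hs0 : 0 < sinh (sg * T)) by lra.
  assert (Hc0 : 0 < cosh (sg * T)) by lra.
  assert (0 < (a * sg) * (sinh (sg * T) * cosh (sg * T)))
    by (apply Rmult_lt_0_compat; apply Rmult_lt_0_compat; assumption).
  nra. }
rewrite <- (sqrt_pow2 _ Hroot); f_equal.
unfold disc_root, Z1; unfold den in *; rewrite Hg.
hyperbolic_field (sg * T) Hx.
Qed.

Lemma Wbar_identity (T : R) : 0 < T ->
  (Z1 T - a) * sqrt ((Z1 T + a) ^ 2 - 2 * g / a) = Z1 T ^ 2 + 2 * Z0 g T - lam.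
Proof.
intro HT; assert (Hx : 0 < sg * T) by (apply Rmult_lt_0_compat; lra).
rewrite (sqrt_discriminant T HT).
unfold disc_root, Z1, Z0; unfold den in *; rewrite Hg, Hl.
hyperbolic_field (sg * T) Hx.
Qed.

End RiccatiSolution.

Theorem mainTheorem9 (lam gs alpha : R) :
  0 < lam -> 0 < gs -> 0 < alpha ->
  alpha ^ 3 - lam * alpha + gs = 0 ->
  2 * alpha ^ 3 > gs ->
  0 < Sigma alpha gs /\
  (forall eps : R, 0 < eps ->
     exists M : R, forall T : R, M < T -> Rabs (Zone alpha gs T - alpha) < eps) /\
  (forall T : R, 0 < T ->
     derivable_pt_lim (Zone alpha gs) T
       (lam - (Zone alpha gs T) ^ 2 - 2 * Zzero alpha gs T) /\
     derivable_pt_lim (Zzero alpha gs) T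
       (2 * Zone alpha gs T * Zzero alpha gs T - gs) /\
     derivable_pt_lim (Zone alpha gs) T (- Wbar alpha gs (Zone alpha gs T)) /\
     Zzero alpha gs T = gs * W lam gs alpha (Zone alpha gs T)).
Proof.
intros _ Hgs Ha Hcub Hbig.
pose proof (Sigma_pos alpha gs Ha Hbig) as Hsg.
pose proof (gs_from_Sigma alpha gs Ha Hbig) as Hg.
change (Zone alpha gs) with (Z1 alpha (Sigma alpha gs)).
change (Zzero alpha gs) with (Z0 alpha (Sigma alpha gs) gs).
set (sg := Sigma alpha gs) in *.
pose proof (lam_from_cubic alpha sg lam gs Ha Hcub Hg) as Hl.
split; [exact Hsg|].
split; [exact (Z1_tends_to_a alpha sg Ha Hsg)|].
intros T HT.
pose proof (Z1_riccati alpha sg Ha Hsg gs lam Hg Hl T HT) as HZ1.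
pose proof (Wbar_identity alpha sg Ha Hsg gs lam Hg Hl T HT) as HW.
unfold Wbar, W.
repeat split.
- exact HZ1.
- exact (Z0_riccati alpha sg Ha Hsg gs Hg T HT).
- rewrite HW; replace (- _) with (lam - Z1 alpha sg T ^ 2 - 2 * Z0 alpha sg gs T)
    by ring; exact HZ1.
- rewrite HW; field; lra.
Qed.
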